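(* Let $(a_0,\ldots,a_n)$ be a finite sequence of positive integers and $\omega=[a_0,\ldots,a_n,1,1,1,\ldots]$. For every $\varepsilon>0$ there is $m_0>0$ such that for every integer $m\ge m_0$ and every infinite sequence of positive integers $I=(a_{n+m},a_{n+m+1},\ldots)$, writing $$\beta^I=[a_0,\ldots,a_n,\underbrace{1,\ldots,1}_{m-1},a_{n+m},a_{n+m+1},\ldots]$$ (digits $a_0,\ldots,a_n$ in positions $0,\ldots,n$, ones in positions $n+1,\ldots,n+m-1$, and $a_j$ in position $j\ge n+m$), we have $$\sum_{i\ge n+m}\alpha_0(\omega)\cdots\alpha_{i-1}(\omega)\log\frac{1}{\alpha_i(\omega)}<\varepsilon$$ and $$\sum_{i=0}^{n+m-1}\left|\alpha_0(\beta^I)\cdots\alpha_{i-1}(\beta^I)\log\frac{1}{\alpha_i(\beta^I)}-\alpha_0(\omega)\cdots\alpha_{i-1}(\omega)\log\frac{1}{\alpha_i(\omega)}\right|<\varepsilon.$$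
   Context: For positive integers $d_0,d_1,\ldots$, $[d_0,d_1,d_2,\ldots]$ denotes the continued fraction $\cfrac{1}{d_0+\cfrac{1}{d_1+\cfrac{1}{d_2+\cdots}}}$, and for $\beta=[d_0,d_1,\ldots]$ we write $\alpha_j(\beta)=[d_j,d_{j+1},\ldots]$. (An empty product equals $1$.) *)

From Stdlib Require Import Reals Lra Lia.
From Coquelicot Require Import Coquelicot.
Open Scope R_scope.

Fixpoint cf_fin (d : nat -> nat) (k : nat) : R :=
  match k with
  | O => 0
  | S k' => / (INR (d O) + cf_fin (fun j => d (S j)) k')
  end.

(* Value of the infinite continued fraction [d 0, d 1, d 2, ...]
   (limit of its convergents; it converges for positive digits). *)
Definition cf (d : nat -> nat) : R := real (Lim_seq (fun k => cf_fin d k)).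

Definition alpha (j : nat) (d : nat -> nat) : R := cf (fun k => d (j + k)%nat).

Fixpoint alpha_prod (d : nat -> nat) (i : nat) : R :=
  match i with
  | O => 1
  | S i' => alpha_prod d i' * alpha i' d
  end.

Definition term (d : nat -> nat) (i : nat) : R :=
  alpha_prod d i * ln (/ alpha i d).

Definition omega_digits (a : nat -> nat) (n : nat) (j : nat) : nat :=
  if Nat.leb j n then a j else 1%nat.

(* Digits of beta^I = [a_0,...,a_n, 1 (m-1 times), I 0, I 1, ...],
   where I k plays the role of a_{n+m+k}. *)
Definition beta_digits (a : nat -> nat) (n m : nat) (I : nat -> nat) (j : nat) : nat :=
  if Nat.leb j n then a j
  else if Nat.ltb j (n + m) then 1%nat
  else I (j - (n + m))%nat.

From Stdlib Require Import Reals Lra Lia.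
From Coquelicot Require Import Coquelicot.
Open Scope R_scope.

(* Write b for the digits of beta^I and w for those of omega: they agree below n + m and are
   ones on (n, n + m).  From alpha_j = 1 / (d_j + alpha_(j+1)), agreement at j gives
   |alpha_j b - alpha_j w| = |alpha_(j+1) b - alpha_(j+1) w| * alpha_j b * alpha_j w, and
   alpha_j <= 2/3 as soon as d_j = d_(j+1) = 1.  So through the block of ones the alphas of b and
   w become (4/9)-geometrically close when read backwards from n + m, which makes the terms of
   index at most n + h small once m - h is large; meanwhile alpha_0 ... alpha_(i-1) <= (2/3)^(i-n-1)
   inside the block, which makes the terms of index above n + h, and the tail of the series of
   omega, small once h is large. *)

Lemma one_le_INR (k : nat) : (0 < k)%nat -> 1 <= INR k.
Proof. intro H. apply (le_INR 1). lia. Qed.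

Lemma ln_le_sub1 t : 0 < t -> ln t <= t - 1.
Proof. intro H. assert (X := exp_ineq1_le (ln t)). rewrite exp_ln in X; lra. Qed.

Lemma ln_inv_lipschitz x y D : 0 < x -> 0 < y -> / x <= D -> / y <= D ->
  Rabs (ln (/ x) - ln (/ y)) <= D * Rabs (x - y).
Proof.
  intros Hx Hy HxD HyD.
  assert (Hln : forall u v, 0 < u -> 0 < v -> / u <= D ->
            ln (/ u) - ln (/ v) <= D * Rabs (u - v)).
  { intros u v Hu Hv HuD.
    rewrite ln_Rinv, ln_Rinv by lra.
    replace (- ln u - - ln v) with (ln (v / u)) by (rewrite ln_div; lra).
    eapply Rle_trans; [apply ln_le_sub1, Rdiv_lt_0_compat; lra|].
    replace (v / u - 1) with (/ u * (v - u)) by (field; lra).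
    assert (v - u <= Rabs (u - v)) by (rewrite Rabs_minus_sym; apply Rle_abs).
    assert (0 < / u) by (apply Rinv_0_lt_compat; lra).
    assert (0 <= Rabs (u - v)) by apply Rabs_pos. nra. }
  apply Rabs_le. split.
  - rewrite Rabs_minus_sym. assert (Hyx := Hln y x Hy Hx HyD). lra.
  - apply Hln; auto.
Qed.

Lemma Rabs_mult_sub_le p q u v :
  Rabs (p * u - q * v) <= Rabs (p - q) * Rabs u + Rabs q * Rabs (u - v).
Proof.
  replace (p * u - q * v) with ((p - q) * u + q * (u - v)) by ring.
  rewrite <- !Rabs_mult. apply Rabs_triang.
Qed.

(* One step x |-> / (A + x) is not a contraction on [0, 1] (A = 1, x near 0); two steps are. *)
Lemma Rinv2_contract A B p q : 1 <= A -> 1 <= B -> 0 <= p -> 0 <= q ->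
  Rabs (/ (A + / (B + p)) - / (A + / (B + q))) <= / 4 * Rabs (p - q).
Proof.
  intros HA HB Hp Hq.
  assert (Ap : 1 <= A * (B + p)) by nra.
  assert (Aq : 1 <= A * (B + q)) by nra.
  replace (/ (A + / (B + p)) - / (A + / (B + q)))
    with ((p - q) * / ((A * (B + p) + 1) * (A * (B + q) + 1)))
    by (field; repeat split; nra).
  rewrite Rabs_mult, Rmult_comm, (Rabs_pos_eq (/ _)).
  - apply Rmult_le_compat_r; [apply Rabs_pos|].
    apply Rinv_le_contravar; nra.
  - left; apply Rinv_0_lt_compat; nra.
Qed.

Lemma sum_geom_le q M : 0 <= q < 1 -> sum_f_R0 (fun k => q ^ k) M <= / (1 - q).
Proof.
  intro Hq. rewrite tech3 by lra. unfold Rdiv.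
  rewrite <- (Rmult_1_l (/ (1 - q))) at 2.
  apply Rmult_le_compat_r; [left; apply Rinv_0_lt_compat; lra|].
  assert (0 <= q ^ S M) by (apply pow_le; lra). lra.
Qed.

Lemma series_geom_dominated (u : nat -> R) C q : 0 <= q < 1 ->
  (forall k, 0 <= u k <= C * q ^ k) -> ex_series u /\ Series u <= C / (1 - q).
Proof.
  intros Hq Hu.
  assert (Hg : is_series (fun k => C * q ^ k) (C * / (1 - q))).
  { apply (is_series_scal_l C (fun k => q ^ k)), is_series_geom.
    rewrite Rabs_pos_eq; lra. }
  assert (Hex : ex_series u).
  { apply (ex_series_le u (fun k => C * q ^ k)); [|exists (C * / (1 - q)); exact Hg].
    intro k. change (norm (u k)) with (Rabs (u k)).
    rewrite Rabs_pos_eq; apply Hu. }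
  split; auto.
  unfold Rdiv. rewrite <- (is_series_unique _ _ Hg).
  apply Series_le; auto. exists (C * / (1 - q)); exact Hg.
Qed.

Lemma pow_eventually_lt q C eps : Rabs q < 1 -> 0 < eps ->
  exists K, forall k, (K <= k)%nat -> C * q ^ k < eps.
Proof.
  intros Hq Heps.
  assert (HC : 0 < Rabs C + 1) by (assert (0 <= Rabs C) by apply Rabs_pos; lra).
  destruct (pow_lt_1_zero q Hq (eps / (Rabs C + 1))) as [K HK].
  { apply Rdiv_lt_0_compat; lra. }
  exists K. intros k Hk. specialize (HK k Hk).
  apply Rle_lt_trans with (Rabs C * Rabs (q ^ k)).
  - rewrite <- Rabs_mult. apply Rle_abs.
  - apply Rle_lt_trans with (Rabs C * (eps / (Rabs C + 1))).
    + apply Rmult_le_compat_l; [apply Rabs_pos | lra].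
    + replace eps with ((Rabs C + 1) * (eps / (Rabs C + 1))) at 2 by (field; lra).
      apply Rmult_lt_compat_r; [apply Rdiv_lt_0_compat|]; lra.
Qed.

Definition pos_digits (d : nat -> nat) : Prop := forall k, (0 < d k)%nat.

Lemma cf_fin_ext d d' K : (forall k, d k = d' k) -> cf_fin d K = cf_fin d' K.
Proof.
  revert d d'; induction K as [|K IH]; intros d d' H; simpl; auto.
  rewrite H, (IH _ (fun j => d' (S j))); auto.
Qed.

Lemma cf_fin_bounds K : forall d, pos_digits d -> 0 <= cf_fin d K <= 1.
Proof.
  induction K as [|K IH]; intros d Hd; simpl; [lra|].
  assert (H1 := one_le_INR _ (Hd O)).
  assert (H2 := IH (fun j => d (S j)) (fun k => Hd (S k))).
  split.
  - left; apply Rinv_0_lt_compat; lra.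
  - rewrite <- Rinv_1; apply Rinv_le_contravar; lra.
Qed.

Lemma cf_fin_cauchy j : forall d, pos_digits d -> forall k l,
  (2 * j <= k)%nat -> (2 * j <= l)%nat -> Rabs (cf_fin d k - cf_fin d l) <= (/ 4) ^ j.
Proof.
  induction j as [|j IH]; intros d Hd k l Hk Hl.
  - destruct (cf_fin_bounds k d Hd), (cf_fin_bounds l d Hd).
    simpl; apply Rabs_le; lra.
  - destruct k as [|[|k]]; [lia|lia|]. destruct l as [|[|l]]; [lia|lia|].
    simpl.
    assert (Hh : pos_digits (fun i => d (S (S i)))) by (intro; apply Hd).
    destruct (cf_fin_bounds k _ Hh), (cf_fin_bounds l _ Hh).
    eapply Rle_trans; [apply Rinv2_contract; auto; apply one_le_INR, Hd|].
    apply Rmult_le_compat_l; [lra|].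
    apply IH; auto; lia.
Qed.

Lemma is_lim_seq_cf_fin d : pos_digits d -> is_lim_seq (cf_fin d) (cf d).
Proof.
  intro Hd.
  assert (Hex : ex_finite_lim_seq (cf_fin d)).
  { apply ex_lim_seq_cauchy_corr. intro eps.
    destruct (pow_lt_1_zero (/ 4)) with (y := pos eps) as [N HN].
    { rewrite Rabs_pos_eq; lra. } { apply cond_pos. }
    exists (2 * N)%nat. intros k l Hk Hl.
    eapply Rle_lt_trans; [apply (cf_fin_cauchy N); auto|].
    specialize (HN N (le_n _)). rewrite Rabs_pos_eq in HN; auto.
    apply pow_le; lra. }
  destruct Hex as [l Hl].
  unfold cf. rewrite (is_lim_seq_unique (fun k => cf_fin d k) l Hl). exact Hl.
Qed.

Lemma cf_ext d d' : (forall k, d k = d' k) -> cf d = cf d'.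
Proof.
  intro H. unfold cf. rewrite (Lim_seq_ext _ (cf_fin d')); auto.
  intro; apply cf_fin_ext; auto.
Qed.

Lemma cf_bounds d : pos_digits d -> 0 <= cf d <= 1.
Proof.
  intro Hd. assert (L := is_lim_seq_cf_fin d Hd). split.
  - apply (is_lim_seq_le (fun _ => 0) (cf_fin d) 0 (cf d)); auto.
    + intro k; apply cf_fin_bounds, Hd.
    + apply is_lim_seq_const.
  - apply (is_lim_seq_le (cf_fin d) (fun _ => 1) (cf d) 1); auto.
    + intro k; apply cf_fin_bounds, Hd.
    + apply is_lim_seq_const.
Qed.

Lemma cf_rec d : pos_digits d -> cf d = / (INR (d O) + cf (fun j => d (S j))).
Proof.
  intro Hd.
  assert (Hs : pos_digits (fun j => d (S j))) by (intro; apply Hd).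
  assert (H1 := one_le_INR _ (Hd O)). assert (H2 := cf_bounds _ Hs).
  assert (Lrec : is_lim_seq (fun k => / (INR (d O) + cf_fin (fun j => d (S j)) k))
                   (/ (INR (d O) + cf (fun j => d (S j))))).
  { apply (is_lim_seq_inv _ (INR (d O) + cf (fun j => d (S j)))).
    - apply is_lim_seq_plus'; [apply is_lim_seq_const | apply is_lim_seq_cf_fin, Hs].
    - intro E; injection E; lra. }
  assert (Lshift := is_lim_seq_cf_fin d Hd).
  apply is_lim_seq_incr_1 in Lshift.
  assert (E := is_lim_seq_unique
    (fun k => / (INR (d O) + cf_fin (fun j => d (S j)) k)) _ Lshift).
  rewrite (is_lim_seq_unique _ _ Lrec) in E. injection E; auto.
Qed.

Lemma alpha_rec j d : pos_digits d -> alpha j d = / (INR (d j) + alpha (S j) d).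
Proof.
  intro Hd. unfold alpha.
  rewrite cf_rec by (intro; apply Hd).
  rewrite Nat.add_0_r. do 2 f_equal. apply cf_ext. intro k. f_equal. lia.
Qed.

Lemma alpha_bounds j d : pos_digits d -> 0 < alpha j d <= 1.
Proof.
  intro Hd. rewrite alpha_rec by auto.
  assert (H1 := one_le_INR _ (Hd j)).
  assert (H2 := cf_bounds (fun k => d (S j + k)%nat) (fun k => Hd _)).
  unfold alpha. split.
  - apply Rinv_0_lt_compat; lra.
  - rewrite <- Rinv_1; apply Rinv_le_contravar; lra.
Qed.

Lemma inv_alpha j d : pos_digits d -> / alpha j d = INR (d j) + alpha (S j) d.
Proof. intro Hd. rewrite (alpha_rec j d Hd), Rinv_inv. reflexivity. Qed.

Lemma alpha_ones_le j d : pos_digits d -> d j = 1%nat -> d (S j) = 1%nat ->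
  alpha j d <= 2 / 3.
Proof.
  intros Hd H0 H1.
  rewrite (alpha_rec j), (alpha_rec (S j)), H0, H1 by auto.
  change (INR 1) with 1.
  destruct (alpha_bounds (S (S j)) d Hd).
  assert (/ 2 <= / (1 + alpha (S (S j)) d)) by (apply Rinv_le_contravar; lra).
  replace (2 / 3) with (/ (1 + / 2)) by field.
  apply Rinv_le_contravar; lra.
Qed.

Lemma alpha_prod_bounds d i : pos_digits d -> 0 <= alpha_prod d i <= 1.
Proof.
  intro Hd. induction i as [|i IH]; simpl; [lra|].
  destruct (alpha_bounds i d Hd). nra.
Qed.

Lemma alpha_prod_ones_le d j t : pos_digits d ->
  (forall k, (j <= k <= j + t)%nat -> d k = 1%nat) -> alpha_prod d (j + t) <= (2 / 3) ^ t.
Proof.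
  intros Hd Hone. induction t as [|t IH].
  - rewrite Nat.add_0_r. apply alpha_prod_bounds, Hd.
  - rewrite Nat.add_succ_r. simpl.
    assert (Hp := alpha_prod_bounds d (j + t) Hd).
    assert (Ha := alpha_bounds (j + t) d Hd).
    assert (alpha (j + t) d <= 2 / 3) by (apply alpha_ones_le; auto; apply Hone; lia).
    assert (alpha_prod d (j + t) <= (2 / 3) ^ t) by (apply IH; intros; apply Hone; lia).
    rewrite Rmult_comm. apply Rmult_le_compat; lra.
Qed.

Lemma ln_inv_alpha_bounds j d : pos_digits d -> 0 <= ln (/ alpha j d) <= INR (d j).
Proof.
  intro Hd. destruct (alpha_bounds j d Hd), (alpha_bounds (S j) d Hd).
  assert (1 <= / alpha j d) by (rewrite <- Rinv_1; apply Rinv_le_contravar; lra).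
  split.
  - rewrite <- ln_1. apply ln_le; lra.
  - eapply Rle_trans; [apply ln_le_sub1; lra|]. rewrite inv_alpha by auto. lra.
Qed.

Lemma term_bounds d i : pos_digits d -> 0 <= term d i <= alpha_prod d i * INR (d i).
Proof.
  intro Hd. unfold term.
  destruct (alpha_prod_bounds d i Hd), (ln_inv_alpha_bounds i d Hd).
  split; [apply Rmult_le_pos | apply Rmult_le_compat_l]; auto.
Qed.

Section TwoExpansions.

Variables b w : nat -> nat.
Hypothesis Hb : pos_digits b.
Hypothesis Hw : pos_digits w.

Lemma alpha_dist_step j : b j = w j ->
  Rabs (alpha j b - alpha j w)
  = Rabs (alpha (S j) b - alpha (S j) w) * (alpha j b * alpha j w).
Proof.
  intro Hj.
  destruct (alpha_bounds j b Hb), (alpha_bounds j w Hw),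
    (alpha_bounds (S j) b Hb), (alpha_bounds (S j) w Hw).
  assert (1 <= INR (w j)) by apply one_le_INR, Hw.
  replace (alpha j b - alpha j w)
    with ((alpha (S j) w - alpha (S j) b) * (alpha j b * alpha j w))
    by (rewrite (alpha_rec j b), (alpha_rec j w), Hj by auto; field; lra).
  rewrite Rabs_mult, Rabs_minus_sym, (Rabs_pos_eq (_ * _)) by nra.
  reflexivity.
Qed.

Lemma alpha_dist_le_shift j u : (forall k, (j <= k < j + u)%nat -> b k = w k) ->
  Rabs (alpha j b - alpha j w) <= Rabs (alpha (j + u) b - alpha (j + u) w).
Proof.
  revert j. induction u as [|u IH]; intros j Hagree.
  - rewrite Nat.add_0_r. lra.
  - rewrite alpha_dist_step by (apply Hagree; lia).
    rewrite Nat.add_succ_r, <- Nat.add_succ_l.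
    destruct (alpha_bounds j b Hb), (alpha_bounds j w Hw).
    assert (0 <= Rabs (alpha (S j) b - alpha (S j) w)) by apply Rabs_pos.
    assert (Rabs (alpha (S j) b - alpha (S j) w)
            <= Rabs (alpha (S j + u) b - alpha (S j + u) w))
      by (apply IH; intros; apply Hagree; lia).
    assert (alpha j b * alpha j w <= 1) by nra.
    nra.
Qed.

Lemma alpha_dist_ones j u : (forall k, (j <= k <= j + u)%nat -> b k = 1%nat /\ w k = 1%nat) ->
  Rabs (alpha j b - alpha j w) <= (4 / 9) ^ u.
Proof.
  revert j. induction u as [|u IH]; intros j Hone.
  - destruct (alpha_bounds j b Hb), (alpha_bounds j w Hw).
    simpl; apply Rabs_le; lra.
  - destruct (Hone j ltac:(lia)) as [Hbj Hwj].
    destruct (Hone (S j) ltac:(lia)) as [Hbj1 Hwj1].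
    rewrite alpha_dist_step by congruence.
    destruct (alpha_bounds j b Hb), (alpha_bounds j w Hw).
    assert (alpha j b <= 2 / 3) by (apply alpha_ones_le; auto).
    assert (alpha j w <= 2 / 3) by (apply alpha_ones_le; auto).
    assert (0 <= Rabs (alpha (S j) b - alpha (S j) w)) by apply Rabs_pos.
    assert (Rabs (alpha (S j) b - alpha (S j) w) <= (4 / 9) ^ u)
      by (apply IH; intros; apply Hone; lia).
    assert (alpha j b * alpha j w <= 4 / 9) by nra.
    simpl; rewrite (Rmult_comm (4 / 9)). apply Rmult_le_compat; nra.
Qed.

Lemma alpha_prod_dist i e : (forall k, (k < i)%nat -> Rabs (alpha k b - alpha k w) <= e) ->
  Rabs (alpha_prod b i - alpha_prod w i) <= INR i * e.
Proof.
  induction i as [|i IH]; intro He; cbn [alpha_prod].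
  - rewrite Rminus_diag, Rabs_R0, Rmult_0_l. lra.
  - assert (IHi : Rabs (alpha_prod b i - alpha_prod w i) <= INR i * e)
      by (apply IH; intros; apply He; lia).
    assert (Hi := He i ltac:(lia)).
    destruct (alpha_bounds i b Hb), (alpha_prod_bounds w i Hw).
    eapply Rle_trans; [apply Rabs_mult_sub_le|].
    rewrite (Rabs_pos_eq (alpha i b)), (Rabs_pos_eq (alpha_prod w i)), S_INR by lra.
    assert (0 <= Rabs (alpha_prod b i - alpha_prod w i)) by apply Rabs_pos.
    assert (0 <= Rabs (alpha i b - alpha i w)) by apply Rabs_pos.
    nra.
Qed.

Lemma term_dist i e : b i = w i ->
  (forall k, (k <= i)%nat -> Rabs (alpha k b - alpha k w) <= e) ->
  Rabs (term b i - term w i) <= (INR (w i) + 1) * INR (S i) * e.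
Proof.
  intros Hi He. unfold term.
  assert (HP : Rabs (alpha_prod b i - alpha_prod w i) <= INR i * e)
    by (apply alpha_prod_dist; intros; apply He; lia).
  assert (Hd : Rabs (alpha i b - alpha i w) <= e) by (apply He; lia).
  assert (HL : Rabs (ln (/ alpha i b) - ln (/ alpha i w))
               <= (INR (w i) + 1) * Rabs (alpha i b - alpha i w)).
  { destruct (alpha_bounds i b Hb), (alpha_bounds i w Hw),
      (alpha_bounds (S i) b Hb), (alpha_bounds (S i) w Hw).
    apply ln_inv_lipschitz; auto; rewrite inv_alpha; try rewrite Hi; auto; lra. }
  destruct (ln_inv_alpha_bounds i b Hb), (alpha_prod_bounds w i Hw).
  rewrite Hi in *.
  eapply Rle_trans; [apply Rabs_mult_sub_le|].
  rewrite (Rabs_pos_eq (ln _)), (Rabs_pos_eq (alpha_prod w i)), S_INR by lra.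
  assert (0 <= Rabs (alpha_prod b i - alpha_prod w i)) by apply Rabs_pos.
  assert (0 <= Rabs (alpha i b - alpha i w)) by apply Rabs_pos.
  assert (0 <= INR i) by apply pos_INR.
  assert (0 <= INR (w i)) by apply pos_INR.
  assert (Rabs (alpha_prod b i - alpha_prod w i) * ln (/ alpha i b) <= INR i * e * INR (w i))
    by (apply Rmult_le_compat; auto).
  assert (0 <= Rabs (ln (/ alpha i b) - ln (/ alpha i w))) by apply Rabs_pos.
  assert ((INR (w i) + 1) * Rabs (alpha i b - alpha i w) <= (INR (w i) + 1) * e)
    by (apply Rmult_le_compat_l; lra).
  assert (alpha_prod w i * Rabs (ln (/ alpha i b) - ln (/ alpha i w)) <= (INR (w i) + 1) * e)
    by nra.
  nra.
Qed.

Variables n N : nat.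
Hypothesis Hagree : forall k, (k < N)%nat -> b k = w k.
Hypothesis Hones : forall k, (n < k < N)%nat -> w k = 1%nat.

Lemma head_sum_le J : (n <= J)%nat -> (S J < N)%nat ->
  sum_f_R0 (fun i => Rabs (term b i - term w i)) J
  <= sum_f_R0 (fun i => (INR (w i) + 1) * INR (S i)) J * (4 / 9) ^ (N - 2 - J).
Proof.
  intros HnJ HJN.
  assert (Hdist : forall k, (k <= S J)%nat ->
            Rabs (alpha k b - alpha k w) <= (4 / 9) ^ (N - 2 - J)).
  { intros k Hk. eapply Rle_trans.
    - apply (alpha_dist_le_shift k (S J - k)). intros; apply Hagree; lia.
    - replace (k + (S J - k))%nat with (S J) by lia.
      apply alpha_dist_ones. intros l Hl.
      rewrite Hagree, Hones by lia. auto. }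
  rewrite Rmult_comm, scal_sum. apply sum_Rle. intros i Hi.
  apply term_dist; [apply Hagree; lia|]. intros; apply Hdist; lia.
Qed.

Lemma tail_term_le i : (n < i < N)%nat -> Rabs (term b i - term w i) <= (2 / 3) ^ (i - S n).
Proof.
  intro Hi.
  assert (Hbound : forall d, pos_digits d -> (forall k, (n < k <= i)%nat -> d k = 1%nat) ->
            0 <= term d i <= (2 / 3) ^ (i - S n)).
  { intros d Hd Hone. destruct (term_bounds d i Hd) as [H0 H1].
    rewrite Hone, Rmult_1_r in H1 by lia.
    replace (alpha_prod d i) with (alpha_prod d (S n + (i - S n))) in H1
      by (f_equal; lia).
    split; auto. eapply Rle_trans; [apply H1|].
    apply alpha_prod_ones_le; auto. intros; apply Hone; lia. }
  destruct (Hbound b Hb) as [Hb0 Hb1]; [intros; rewrite Hagree, Hones by lia; auto|].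
  destruct (Hbound w Hw) as [Hw0 Hw1]; [intros; apply Hones; lia|].
  apply Rabs_le. lra.
Qed.

Lemma tail_sum_le J M : (n <= J)%nat -> (S J + M < N)%nat ->
  sum_f_R0 (fun u => Rabs (term b (S J + u) - term w (S J + u))) M <= 3 * (2 / 3) ^ (J - n).
Proof.
  intros HnJ HJN.
  apply Rle_trans with (sum_f_R0 (fun u => (2 / 3) ^ u * (2 / 3) ^ (J - n)) M).
  - apply sum_Rle. intros u Hu. rewrite <- pow_add.
    replace (u + (J - n))%nat with (S J + u - S n)%nat by lia.
    apply tail_term_le. lia.
  - rewrite <- scal_sum, (Rmult_comm 3).
    apply Rmult_le_compat_l; [apply pow_le; lra|].
    eapply Rle_trans; [apply sum_geom_le; lra|]. right; field.
Qed.

End TwoExpansions.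

Lemma omega_digits_pos a n : (forall k, (k <= n)%nat -> (0 < a k)%nat) ->
  pos_digits (omega_digits a n).
Proof. intros Ha k. unfold omega_digits. destruct (Nat.leb_spec k n); auto. Qed.

Lemma omega_digits_tail a n j : (n < j)%nat -> omega_digits a n j = 1%nat.
Proof. intro Hj. unfold omega_digits. destruct (Nat.leb_spec j n); auto; lia. Qed.

Lemma beta_digits_pos a n m I : (forall k, (k <= n)%nat -> (0 < a k)%nat) ->
  (forall k, (0 < I k)%nat) -> pos_digits (beta_digits a n m I).
Proof.
  intros Ha HI k. unfold beta_digits.
  destruct (Nat.leb_spec k n), (Nat.ltb_spec k (n + m)); auto.
Qed.

Lemma beta_digits_agree a n m I j : (j < n + m)%nat ->
  beta_digits a n m I j = omega_digits a n j.
Proof.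
  intro Hj. unfold beta_digits, omega_digits.
  destruct (Nat.leb_spec j n), (Nat.ltb_spec j (n + m)); auto; lia.
Qed.

Lemma omega_tail_series a n m : (forall k, (k <= n)%nat -> (0 < a k)%nat) -> (0 < m)%nat ->
  ex_series (fun k => term (omega_digits a n) (n + m + k)) /\
  Series (fun k => term (omega_digits a n) (n + m + k)) <= 3 * (2 / 3) ^ (m - 1).
Proof.
  intros Ha Hm. assert (Hw := omega_digits_pos a n Ha).
  destruct (series_geom_dominated (fun k => term (omega_digits a n) (n + m + k))
              ((2 / 3) ^ (m - 1)) (2 / 3)) as [Hex Hle]; [lra| |].
  - intro k. destruct (term_bounds _ (n + m + k) Hw) as [H0 H1].
    rewrite omega_digits_tail, Rmult_1_r in H1 by lia.
    split; auto. eapply Rle_trans; [apply H1|].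
    rewrite <- pow_add. replace (n + m + k)%nat with (S n + (m - 1 + k))%nat by lia.
    apply alpha_prod_ones_le; auto. intros; apply omega_digits_tail; lia.
  - split; auto. eapply Rle_trans; [apply Hle|]. right; field.
Qed.

Theorem mainTheorem11 :
  forall (n : nat) (a : nat -> nat),
    (forall k : nat, (k <= n)%nat -> (0 < a k)%nat) ->
    forall eps : R, 0 < eps ->
    exists m0 : nat, (0 < m0)%nat /\
      forall m : nat, (m0 <= m)%nat ->
      forall I : nat -> nat, (forall k : nat, (0 < I k)%nat) ->
        ex_series (fun k => term (omega_digits a n) (n + m + k)%nat) /\
        Series (fun k => term (omega_digits a n) (n + m + k)%nat) < eps /\
        sum_f_R0 (fun i => Rabs (term (beta_digits a n m I) i
                                 - term (omega_digits a n) i))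
                 (n + m - 1)%nat < eps.
Proof.
  intros n a Ha eps Heps.
  destruct (pow_eventually_lt (2 / 3) 3 (eps / 2)) as [h Hh];
    [rewrite Rabs_pos_eq; lra | lra |].
  set (C := sum_f_R0 (fun i => (INR (omega_digits a n i) + 1) * INR (S i)) (n + h)).
  destruct (pow_eventually_lt (4 / 9) C (eps / 2)) as [g Hg];
    [rewrite Rabs_pos_eq; lra | lra |].
  exists (h + g + 2)%nat. split; [lia|]. intros m Hm I HI.
  destruct (omega_tail_series a n m Ha) as [Hex Htail]; [lia|].
  assert (3 * (2 / 3) ^ (m - 1) < eps / 2) by (apply Hh; lia).
  split; [|split]; [exact Hex | lra |].
  assert (Hagree := beta_digits_agree a n m I).
  assert (Hones : forall k, (n < k < n + m)%nat -> omega_digits a n k = 1%nat)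
    by (intros; apply omega_digits_tail; lia).
  assert (Hb := beta_digits_pos a n m I Ha HI).
  assert (Hw := omega_digits_pos a n Ha).
  rewrite (tech2 _ (n + h)) by lia.
  assert (Hhead := head_sum_le _ _ Hb Hw n (n + m) Hagree Hones (n + h) ltac:(lia) ltac:(lia)).
  assert (Hrest := tail_sum_le _ _ Hb Hw n (n + m) Hagree Hones (n + h) (n + m - 1 - S (n + h))
                     ltac:(lia) ltac:(lia)).
  replace (n + h - n)%nat with h in Hrest by lia.
  assert (3 * (2 / 3) ^ h < eps / 2) by (apply Hh; lia).
  assert (C * (4 / 9) ^ (n + m - 2 - (n + h)) < eps / 2) by (apply Hg; lia).
  fold C in Hhead. lra.
Qed.
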